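(* Let $q$ be a power of an odd prime $p$, let $G$ be one of $\mathrm{SL}_2(q)$, $\mathrm{GL}_2(q)$, $\mathrm{PSL}_2(q)$, $\mathrm{PGL}_2(q)$, and let $\mathcal{C}$ be a conjugacy class of non-trivial unipotent elements in $G$. Then $K_{\mathcal{C}}$ is irreducible.
   Context: For a finite group $G$ and a subset $\mathcal{C}\subseteq G\setminus\{1\}$ closed under conjugation, the Killing form $K_{\mathcal{C}}$ is the bilinear form on the complex vector space with basis $\mathcal{C}$ given on basis elements by $K_{\mathcal{C}}(a,b)=|C_G(ab)\cap\mathcal{C}|$. $K_{\mathcal{C}}$ is irreducible if the graph with vertex set $\mathcal{C}$, in which distinct $a,b$ are adjacent iff $C_G(ab)\cap\mathcal{C}\neq\emptyset$, is connected, and reducible otherwise. *)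

From HB Require Import structures.
From mathcomp Require Import all_boot all_order all_algebra all_fingroup all_solvable all_field.
Set Implicit Arguments. Unset Strict Implicit. Unset Printing Implicit Defensive.
Import GRing.Theory.
Local Open Scope group_scope.

Definition killing_adj (gT : finGroupType) (G C : {set gT}) : rel gT :=
  fun a b => [&& a \in C, b \in C, a != b & C :&: 'C_G[a * b] != set0].

(* K_C is irreducible iff this graph (vertex set C) is connected. *)
Definition killing_irreducible (gT : finGroupType) (G C : {set gT}) : Prop :=
  forall a b, a \in C -> b \in C -> connect (killing_adj G C) a b.

Definition unipotent (F : finFieldType) (g : {'GL_2[F]}) : Prop :=
  exists k : nat, ((GLval g - 1) ^+ k = 0)%R.

Definition SL2 (F : finFieldType) : {set {'GL_2[F]}} :=
  [set g : {'GL_2[F]} | (\det (GLval g) == 1)%R].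

Lemma SL2_group_set (F : finFieldType) : group_set (SL2 F).
Proof.
apply/group_setP; split; first by rewrite inE GL_1E det1.
move=> x y; rewrite !inE GL_ME det_mulmx => /eqP -> /eqP ->.
by rewrite mulr1.
Qed.

Canonical SL2_group (F : finFieldType) := Group (SL2_group_set F).

Definition PGL2 (F : finFieldType) := ('GL_2[F] / 'Z('GL_2[F]))%G.
Definition PSL2 (F : finFieldType) := (SL2_group F / 'Z(SL2_group F))%G.

From HB Require Import structures.
From mathcomp Require Import all_boot all_order all_algebra all_fingroup all_solvable all_field.
From mathcomp Require Import ring.

(* Every nontrivial unipotent element of GL_2(q) is SL_2(q)-conjugate to some
   u(s) = [[1,s],[0,1]] with s <> 0, so for G containing SL_2(q) it suffices to
   join u(s) to each of its G-conjugates in the Killing graph of C = u(s)^G.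
   Two commuting elements a, b of C are adjacent, as a centralizes ab; this
   joins u(s) to its upper unitriangular conjugates, and likewise joins all
   lower unitriangular members of C. The bridge between the two families is the
   edge from u(s) to l(-4/s) = [[1,0],[-4/s,1]]: their product has trace -2 and
   determinant 1, so adding 2 to it gives a unipotent element of C centralizing
   it. For PGL_2(q) and PSL_2(q), edges map to edges (or loops) under the
   quotient map, so connectivity descends to the image classes. *)

Set Implicit Arguments. Unset Strict Implicit. Unset Printing Implicit Defensive.
Import GRing.Theory.

Section Matrix2.
Variable R : comNzRingType.
Local Open Scope ring_scope.
Implicit Types (a b c d : R) (A : 'M[R]_2).

Definition mx2 a b c d : 'M[R]_2 :=
  \matrix_(i, j) if i == 0 :> nat then (if j == 0 :> nat then a else b)
                 else (if j == 0 :> nat then c else d).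

Lemma mx2_eta A : A = mx2 (A 0 0) (A 0 1) (A 1 0) (A 1 1).
Proof.
by apply/matrixP=> -[[|[|i]] Hi] // [[|[|j]] Hj] //; rewrite mxE;
  congr (A _ _); apply: val_inj.
Qed.

Lemma mul_mx2 a b c d a' b' c' d' :
  mx2 a b c d *m mx2 a' b' c' d' =
  mx2 (a * a' + b * c') (a * b' + b * d') (c * a' + d * c') (c * b' + d * d').
Proof.
apply/matrixP=> i j; rewrite !mxE !big_ord_recl big_ord0 !mxE /= addr0.
by case: ifP; case: ifP.
Qed.

Lemma add_mx2 a b c d a' b' c' d' :
  mx2 a b c d + mx2 a' b' c' d' = mx2 (a + a') (b + b') (c + c') (d + d').
Proof. by apply/matrixP=> i j; rewrite !mxE; case: ifP; case: ifP. Qed.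

Lemma scale_mx2 k a b c d : k *: mx2 a b c d = mx2 (k * a) (k * b) (k * c) (k * d).
Proof. by apply/matrixP=> i j; rewrite !mxE; case: ifP; case: ifP. Qed.

Lemma scalar_mx2 k : k%:M = mx2 k 0 0 k.
Proof. by rewrite [LHS]mx2_eta !mxE. Qed.

Lemma det_mx2 a b c d : \det (mx2 a b c d) = a * d - b * c.
Proof.
rewrite (expand_det_row _ 0) !big_ord_recl big_ord0 /cofactor !det_mx11 !mxE /=.
by rewrite expr0 expr1; ring.
Qed.

Lemma trace_mx2 a b c d : \tr (mx2 a b c d) = a + d.
Proof. by rewrite /mxtrace !big_ord_recl big_ord0 !mxE /= addr0. Qed.

Lemma mx2_Cayley_Hamilton A : A *m A = \tr A *: A - (\det A)%:M.
Proof.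
rewrite [in LHS](mx2_eta A) [in RHS](mx2_eta A) mul_mx2 trace_mx2 det_mx2.
by rewrite scale_mx2 scalar_mx2 -scaleN1r scale_mx2 add_mx2; congr mx2; ring.
Qed.

End Matrix2.

Section Nilpotent2.
Variable F : fieldType.
Local Open Scope ring_scope.
Implicit Types (N : 'M[F]_2).

Lemma nilpotent_mx2_det N k : N ^+ k = 0 -> \det N = 0.
Proof.
move=> Nk0; have : N ^+ k \isn't a GRing.unit by rewrite Nk0 unitr0.
by apply: contraNeq => detN; rewrite unitrX // unitmxE unitfE.
Qed.

Lemma nilpotent_mx2_trace N k : N ^+ k = 0 -> \tr N = 0.
Proof.
move=> Nk0; have N2 : N * N = \tr N *: N.
  by rewrite -mulmxE mx2_Cayley_Hamilton (nilpotent_mx2_det Nk0) raddf0 subr0.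
have NX j : N ^+ j.+1 = \tr N ^+ j *: N.
  elim: j => [|j IH]; first by rewrite expr1 expr0 scale1r.
  by rewrite exprSr IH -scalerAl N2 scalerA -exprSr.
have [-> | nzN] := eqVneq N 0; first exact: mxtrace0.
case: k Nk0 => [|k]; first by move/eqP; rewrite expr0 oner_eq0.
by rewrite NX => /eqP; rewrite scalemx_eq0 (negbTE nzN) orbF expf_eq0 => /andP[_ /eqP].
Qed.

Lemma nilpotent_mx2_conj N k : N ^+ k = 0 -> N != 0 ->
  exists2 g : 'M[F]_2, \det g = 1 &
    exists2 s, s != 0 & g *m mx2 0 s 0 0 = N *m g.
Proof.
move=> Nk0 nzN; have trN := nilpotent_mx2_trace Nk0.
have detN := nilpotent_mx2_det Nk0.
move: trN detN nzN; rewrite [N]mx2_eta trace_mx2 det_mx2.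
move: (N 0 0) (N 0 1) (N 1 0) (N 1 1) => a b c d /eqP.
rewrite addrC addr_eq0 => /eqP-> det0 nzN.
have [b0 | nz_b] := eqVneq b 0.
  have : a * a = 0 by rewrite -oppr0 -det0 b0; ring.
  move/eqP; rewrite mulf_eq0 orbb => /eqP a0.
  have nz_c : c != 0.
    by apply: contraNneq nzN => c0; rewrite a0 b0 c0 oppr0 -scalar_mx2 raddf0.
  exists (mx2 0 (-1) 1 0); first by rewrite det_mx2; ring.
  by exists (- c); rewrite ?oppr_eq0 // !mul_mx2 a0 b0; congr mx2; ring.
have -> : c = - (a * a) / b.
  by apply: (mulIf nz_b); rewrite divfK // -[RHS]subr0 -det0; ring.
exists (mx2 b 0 (- a) b^-1); first by rewrite det_mx2; field.
by exists b^-1; rewrite ?invr_eq0 // !mul_mx2; congr mx2; field.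
Qed.

End Nilpotent2.

Local Open Scope group_scope.

Lemma connect_homo (T T' : finType) (e : rel T) (e' : rel T') (f : T -> T') :
  (forall x y, e x y -> connect e' (f x) (f y)) ->
  forall x y, connect e x y -> connect e' (f x) (f y).
Proof.
move=> fe x _ /connectP[p e_p ->]; elim: p x e_p => //= y p IHp x /andP[exy].
by move/IHp; apply: connect_trans; apply: fe.
Qed.

Section KillingGraph.
Variables (gT : finGroupType) (G : {group gT}) (C : {set gT}).
Local Notation adj := (killing_adj G C).

Lemma killing_adjJ a b g : G \subset 'N(C) -> g \in G -> adj a b -> adj (a ^ g) (b ^ g).
Proof.
move=> nCG gG /and4P[aC bC neq_ab /set0Pn[c /setIP[cC /setIP[cG c_ab]]]].
have gN := subsetP nCG g gG.
apply/and4P; split; rewrite ?memJ_norm ?(inj_eq (@conjg_inj _ g)) //.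
apply/set0Pn; exists (c ^ g).
by rewrite in_setI memJ_norm // in_setI groupJ // -conjMg cent1J memJ_conjg cC.
Qed.

Lemma connect_killingJ a b g : G \subset 'N(C) -> g \in G ->
  connect adj a b -> connect adj (a ^ g) (b ^ g).
Proof.
move=> nCG gG; apply: (connect_homo (f := conjg^~ g)) => x y.
by move/(killing_adjJ nCG gG)/connect1.
Qed.

Lemma connect_killing_commute a b : C \subset G -> a \in C -> b \in C ->
  commute a b -> connect adj a b.
Proof.
move=> sCG aC bC cab; have [-> | neq_ab] := eqVneq a b; first exact: connect0.
apply: connect1; apply/and4P; split => //; apply/set0Pn; exists a.
rewrite in_setI aC in_setI (subsetP sCG) //=; apply/cent1P.
by rewrite /commute -mulgA -cab mulgA.
Qed.

End KillingGraph.

Lemma killing_irreducible_class (gT : finGroupType) (G : {group gT}) x :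
  x \in G -> {in G, forall h, connect (killing_adj G (x ^: G)) x (x ^ h)} ->
  killing_irreducible G (x ^: G).
Proof.
move=> xG x_xG _ _ /imsetP[ha haG ->] /imsetP[hb hbG ->].
have := connect_killingJ (class_norm x G) haG (x_xG _ (groupM hbG (groupVr haG))).
by rewrite -conjgM mulgKV.
Qed.

Lemma killing_irreducible_morphim (gT rT : finGroupType) (D G : {group gT})
    (f : {morphism D >-> rT}) (C : {set gT}) :
  G \subset D -> C \subset G -> killing_irreducible G C ->
  killing_irreducible (f @* G) (f @* C).
Proof.
move=> sGD sCG irrC _ _ /morphimP[a _ aC ->] /morphimP[b _ bC ->].
apply: connect_homo (irrC a b aC bC) => u v.
case/and4P=> uC vC _ /set0Pn[c /setIP[cC /setIP[cG c_uv]]].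
have [-> | neq_fuv] := eqVneq (f u) (f v); first exact: connect0.
have cD := subsetP sGD c cG.
have [uD vD] : u \in D /\ v \in D by rewrite !(subsetP sGD) ?(subsetP sCG).
apply: connect1; apply/and4P; split; rewrite ?mem_morphim //.
apply/set0Pn; exists (f c); rewrite in_setI in_setI !mem_morphim //=.
apply/cent1P; rewrite /commute -!morphM ?groupM //.
by move/cent1P: c_uv => ->.
Qed.

Section GL2.
Variable F : finFieldType.
Local Open Scope ring_scope.
Local Notation GL := {'GL_2[F]}.
Implicit Types (A : 'M[F]_2) (x y h : GL).

Definition mxGL A : GL := insubd (1%g : GL) A.

Lemma mxGLK A : \det A != 0 -> GLval (mxGL A) = A.
Proof. by move=> detA; rewrite val_insubd unitmxE unitfE detA. Qed.

Lemma mxGLK1 A : \det A = 1 -> GLval (mxGL A) = A.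
Proof. by move=> detA; rewrite mxGLK // detA oner_neq0. Qed.

Lemma mxGL_SL A : \det A = 1 -> mxGL A \in SL2 F.
Proof. by move=> detA; rewrite inE mxGLK1 detA. Qed.

Lemma GL_conj_mx x y h : GLval h *m GLval y = GLval x *m GLval h -> (x ^ h)%g = y.
Proof. by move=> E; rewrite conjgE; apply: (canLR (mulKg h)); apply: val_inj. Qed.

Lemma GL_commute_mx x y : GLval x *m GLval y = GLval y *m GLval x -> commute x y.
Proof. by move=> E; apply: val_inj; exact: E. Qed.

Definition utri s : GL := mxGL (mx2 1 s 0 1).
Definition ltri s : GL := mxGL (mx2 1 0 s 1).

Lemma utriE s : GLval (utri s) = mx2 1 s 0 1.
Proof. by rewrite mxGLK // det_mx2 mulr1 mulr0 subr0 oner_neq0. Qed.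

Lemma ltriE s : GLval (ltri s) = mx2 1 0 s 1.
Proof. by rewrite mxGLK // det_mx2 mulr1 mul0r subr0 oner_neq0. Qed.

Lemma utri_SL s : utri s \in SL2 F.
Proof. by rewrite inE utriE det_mx2 mulr1 mulr0 subr0. Qed.

Lemma utri_neq_ltri s t : s != 0 -> utri s != ltri t.
Proof.
apply: contra => /eqP/(congr1 (fun g : GL => GLval g 0 1)).
by rewrite utriE ltriE !mxE /= => ->.
Qed.

Lemma commute_utri s t : commute (utri s) (utri t).
Proof. by apply: GL_commute_mx; rewrite !utriE !mul_mx2; congr mx2; ring. Qed.

Lemma commute_ltri s t : commute (ltri s) (ltri t).
Proof. by apply: GL_commute_mx; rewrite !ltriE !mul_mx2; congr mx2; ring. Qed.

Lemma GL_det_mx2 h : GLval h 0 0 * GLval h 1 1 - GLval h 0 1 * GLval h 1 0 != 0.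
Proof. by have := GL_det h; rewrite {1}(mx2_eta (GLval h)) det_mx2. Qed.

Lemma utriJ_upper s h : GLval h 1 0 = 0 ->
  (utri s ^ h)%g = utri (s * GLval h 1 1 / GLval h 0 0).
Proof.
move=> h10; have := GL_det_mx2 h; rewrite h10 mulr0 subr0 mulf_eq0 negb_or.
set a := GLval h 0 0; set b := GLval h 0 1; set d := GLval h 1 1.
have eh : GLval h = mx2 a b 0 d by rewrite [LHS]mx2_eta h10.
case/andP=> nz_a _; apply: GL_conj_mx; rewrite !utriE eh !mul_mx2.
by congr mx2; field.
Qed.

Lemma utriJ_lower s h : GLval h 1 1 = 0 ->
  (utri s ^ h)%g = ltri (s * GLval h 1 0 / GLval h 0 1).
Proof.
move=> h11; have := GL_det_mx2 h; rewrite h11 mulr0 sub0r oppr_eq0 mulf_eq0 negb_or.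
set a := GLval h 0 0; set b := GLval h 0 1; set c := GLval h 1 0.
have eh : GLval h = mx2 a b c 0 by rewrite [LHS]mx2_eta h11.
case/andP=> nz_b _; apply: GL_conj_mx; rewrite utriE ltriE eh !mul_mx2.
by congr mx2; field.
Qed.

Lemma unipotent_conj_utri x : unipotent x -> x != 1%g ->
  exists2 g, g \in SL2 F & exists2 s, s != 0 & (x ^ g)%g = utri s.
Proof.
case=> k Nk0 nt_x; have nzN : GLval x - 1 != 0.
  by apply: contra nt_x; rewrite subr_eq0 => /eqP x1; apply/eqP/val_inj.
have [g detg [s nz_s gN]] := nilpotent_mx2_conj Nk0 nzN.
exists (mxGL g); first exact: mxGL_SL.
exists s => //; apply: GL_conj_mx; rewrite utriE mxGLK1 //.
have -> : mx2 1 s 0 1 = 1%:M + mx2 0 s 0 0.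
  by rewrite scalar_mx2 add_mx2; congr mx2; ring.
by rewrite mulmxDr mulmx1 gN mulmxBl mulmxE mul1r addrC subrK.
Qed.

End GL2.

Section UtriClass.
Local Open Scope ring_scope.
Variables (F : finFieldType) (G : {group {'GL_2[F]}}) (s : F).
Hypotheses (sSG : SL2 F \subset G) (two_nz : 2%:R != 0 :> F) (nz_s : s != 0).
Local Notation C := (utri s ^: G)%g.
Local Notation adj := (killing_adj G C).
Local Notation m := (- 4%:R / s).

Let usG : utri s \in G := subsetP sSG _ (utri_SL s).
Let sCG : C \subset G := class_subG usG (subxx G).

Lemma SL_conj_in_class A x : \det A = 1 -> (utri s ^ mxGL A)%g = x -> x \in C.
Proof. by move=> detA <-; rewrite memJ_class // (subsetP sSG) // mxGL_SL. Qed.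

Lemma ltri_in_class : ltri m \in C.
Proof.
have detW : \det (mx2 0 (- s / 2%:R) (2%:R / s) 0) = 1.
  by rewrite det_mx2; field; rewrite ?nz_s ?two_nz.
apply: (SL_conj_in_class detW); apply: GL_conj_mx.
by rewrite utriE ltriE (mxGLK1 detW) !mul_mx2; congr mx2; field; rewrite ?nz_s ?two_nz.
Qed.

Lemma killing_adj_utri_ltri : adj (utri s) (ltri m).
Proof.
pose w := mxGL (mx2 (-1) s m 3%:R).
have detw : \det (mx2 (-1) s m 3%:R) = 1 by rewrite det_mx2; field.
have wE : GLval w = GLval (utri s * ltri m)%g + 2%:M.
  by rewrite (mxGLK1 detw) GL_MxE utriE ltriE mul_mx2 scalar_mx2 add_mx2;
    congr mx2; field.
have w_in_C : w \in C.
  have detV : \det (mx2 1 0 (- 2%:R / s) 1) = 1 by rewrite det_mx2; field.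
  apply: (SL_conj_in_class detV); apply: GL_conj_mx.
  by rewrite (mxGLK1 detV) (mxGLK1 detw) utriE !mul_mx2; congr mx2; field.
have w_cent : commute w (utri s * ltri m)%g.
  by apply: GL_commute_mx; rewrite wE mulmxDl mulmxDr scalar_mxC.
apply/and4P; split; rewrite ?class_refl ?ltri_in_class ?utri_neq_ltri //.
apply/set0Pn; exists w; rewrite in_setI w_in_C in_setI (subsetP sCG) //=.
exact/cent1P.
Qed.

Lemma connect_utri_ltri t : ltri t \in C -> connect adj (utri s) (ltri t).
Proof.
move=> ltC; apply: connect_trans (connect1 killing_adj_utri_ltri) _.
exact: connect_killing_commute sCG ltri_in_class ltC (commute_ltri _ _).
Qed.

Lemma connect_utri_conj h : h \in G -> connect adj (utri s) (utri s ^ h)%g.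
Proof.
move=> hG; have [h10 | nz_h10] := eqVneq (GLval h 1 0) 0.
  apply: connect_killing_commute (class_refl _ _) _ _ => //; first exact: memJ_class.
  by rewrite utriJ_upper //; apply: commute_utri.
(* Right multiplication by u clears the (1,1) entry, making the conjugate lower
   unitriangular; conjugating back by u^-1 fixes utri s. *)
pose u := utri (- GLval h 1 1 / GLval h 1 0).
have uG : u \in G := subsetP sSG _ (utri_SL _).
have hu11 : GLval (h * u)%g 1 1 = 0.
  by rewrite GL_MxE utriE [GLval h]mx2_eta mul_mx2 !mxE /=; field.
have := memJ_class (utri s) (groupM hG uG).
rewrite [X in X \in _]utriJ_lower // => /connect_utri_ltri; rewrite -utriJ_lower //.
move=> /(connect_killingJ (class_norm _ _) (groupVr uG)).
rewrite -conjgM mulgK; congr (connect _ _ _).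
by rewrite /u conjgE invgK mulgA commute_utri mulgK.
Qed.

End UtriClass.

Lemma finField_two_neq0 (F : finFieldType) p k :
  prime p -> odd p -> #|F| = (p ^ k)%N -> (2%:R != 0 :> F)%R.
Proof.
move=> p_pr p_odd cardF; apply: contraTneq p_odd => two0.
have : 2 \in [pchar F]%R by rewrite inE /= two0 eqxx.
by rewrite (pcharf_eq (card_finPcharP cardF p_pr)) inE => /eqP <-.
Qed.

Section UnipotentClasses.
Variables (F : finFieldType) (G : {group {'GL_2[F]}}).
Hypotheses (sSG : SL2 F \subset G) (two_nz : (2%:R != 0 :> F)%R).

Lemma killing_irreducible_unipotent_class x :
  x \in G -> x != 1 -> unipotent x -> killing_irreducible G (x ^: G).
Proof.
move=> xG ntx ux; have [g gSL [s nz_s xg]] := unipotent_conj_utri ux ntx.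
rewrite -(classGidl x (subsetP sSG g gSL)) xg.
apply: killing_irreducible_class; first by rewrite (subsetP sSG) ?utri_SL.
exact: connect_utri_conj.
Qed.

Lemma killing_irreducible_unipotent C :
  C \in classes G -> 1 \notin C -> {in C, forall g, unipotent g} ->
  killing_irreducible G C.
Proof.
case/imsetP=> x xG -> n1C unipC; have xC := class_refl G x.
apply: killing_irreducible_unipotent_class => //; last exact: unipC.
by apply: contraNneq n1C => <-.
Qed.

Lemma killing_irreducible_unipotent_quotient (C : {set coset_of 'Z(G)}) :
  C \in classes (G / 'Z(G)) -> 1 \notin C ->
  {in C, forall x, exists2 g, g \in G /\ unipotent g & coset 'Z(G) g = x} ->
  killing_irreducible (G / 'Z(G)) C.
Proof.
case/imsetP=> y _ -> n1C unipC; have [g [gG ug] gy] := unipC y (class_refl _ y).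
rewrite -{}gy in n1C *.
have nZG : G \subset 'N('Z(G)) := normal_norm (center_normal G).
have ntg : g != 1 by apply: contraNneq n1C => ->; rewrite coset_id ?class_refl.
rewrite -quotient_class ?(subsetP nZG) //.
apply: killing_irreducible_morphim nZG (class_subG gG (subxx G)) _.
exact: killing_irreducible_unipotent_class.
Qed.

End UnipotentClasses.

Theorem corollary3p5 (p k : nat) (F : finFieldType) :
  prime p -> odd p -> (0 < k)%N -> #|F| = (p ^ k)%N ->
  (* G = GL_2(q) *)
  (forall C : {set {'GL_2[F]}},
     C \in classes 'GL_2[F] -> 1%g \notin C ->
     {in C, forall g, unipotent g} ->
     killing_irreducible 'GL_2[F] C) /\
  (* G = SL_2(q) *)
  (forall C : {set {'GL_2[F]}},
     C \in classes (SL2 F) -> 1%g \notin C ->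
     {in C, forall g, unipotent g} ->
     killing_irreducible (SL2 F) C) /\
  (* G = PGL_2(q) ; unipotent = image of a unipotent element of GL_2(q) *)
  (forall C : {set coset_of 'Z('GL_2[F])},
     C \in classes (PGL2 F) -> 1%g \notin C ->
     {in C, forall x, exists2 g, unipotent g & coset 'Z('GL_2[F]) g = x} ->
     killing_irreducible (PGL2 F) C) /\
  (* G = PSL_2(q) ; unipotent = image of a unipotent element of SL_2(q) *)
  (forall C : {set coset_of 'Z(SL2_group F)},
     C \in classes (PSL2 F) -> 1%g \notin C ->
     {in C, forall x, exists2 g, (g \in SL2 F) /\ unipotent g &
                                 coset 'Z(SL2_group F) g = x} ->
     killing_irreducible (PSL2 F) C).
Proof.
move=> p_pr p_odd _ cardF; have two_nz := finField_two_neq0 p_pr p_odd cardF.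
have sSGL : SL2 F \subset 'GL_2[F] := subsetT _.
split; [|split; [|split]].
- exact: killing_irreducible_unipotent.
- exact: (@killing_irreducible_unipotent _ (SL2_group F)).
- move=> C CG n1C unipC; apply: killing_irreducible_unipotent_quotient => //.
  by move=> x /unipC[g ug <-]; exists g; rewrite ?inE.
- exact: (@killing_irreducible_unipotent_quotient _ (SL2_group F)).
Qed.
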